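(* Let $m \in \mathbb N$ and $X, Y, Z \in M_m$. Then $\cos\varphi\, X + \sin\varphi\, Y + Z \in \mathcal U_m$ for all $\varphi \in \mathbb R$ if and only if $$|X|^2 = |Y|^2 = I_m - |Z|^2 \quad\text{and}\quad \operatorname{Re}(X^\ast Y) = \operatorname{Re}(X^\ast Z) = \operatorname{Re}(Y^\ast Z) = 0_m.$$
   Context: $M_m$ is the set of $m\times m$ complex matrices and $\mathcal U_m$ the unitary ones. For $A \in M_m$, $\operatorname{Re}A = \tfrac12(A + A^\ast)$ and $|A| = (A^\ast A)^{1/2}$, so $|A|^2 = A^\ast A$. *)

From mathcomp Require Import all_boot all_order all_algebra.
From mathcomp Require Import complex.
From mathcomp Require Import all_classical all_reals.
From mathcomp Require Import trigo.
Set Implicit Arguments. Unset Strict Implicit. Unset Printing Implicit Defensive.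
Import Order.TTheory GRing.Theory Num.Theory.
Local Open Scope ring_scope.
Local Open Scope complex_scope.

Definition adj (R : rcfType) (m n : nat) (A : 'M[R[i]]_(m, n)) : 'M[R[i]]_(n, m) :=
  (map_mx (fun z => z^*) A)^T.

Definition mxRe (R : rcfType) (m : nat) (A : 'M[R[i]]_m) : 'M[R[i]]_m :=
  (2%:R)^-1 *: (A + adj A).

Definition absSq (R : rcfType) (m : nat) (A : 'M[R[i]]_m) : 'M[R[i]]_m :=
  adj A *m A.

Definition unitary (R : rcfType) (m : nat) (U : 'M[R[i]]_m) : Prop :=
  adj U *m U = 1%:M /\ U *m adj U = 1%:M.

(* For real a, b the matrix |aX + bY + Z|^2 expands as
   a^2 |X|^2 + b^2 |Y|^2 + |Z|^2 + 2ab Re(X^*Y) + 2a Re(X^*Z) + 2b Re(Y^*Z),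
   and for square matrices U^*U = I already forces UU^* = I.  So the
   hypothesis says that this trigonometric expression, with a = cos phi and
   b = sin phi, equals I for every phi.  Comparing phi = 0 with phi = pi and
   phi = pi/2 with phi = -pi/2 kills Re(X^*Z) and Re(Y^*Z) and gives
   |X|^2 = |Y|^2 = I - |Z|^2; then phi = pi/4, where 2 cos phi sin phi = 1,
   kills Re(X^*Y).  Conversely these relations collapse the expansion to
   (cos^2 phi + sin^2 phi)(I - |Z|^2) + |Z|^2 = I. *)
From mathcomp Require Import all_boot all_order all_algebra.
From mathcomp Require Import complex.
From mathcomp Require Import all_classical all_reals.
From mathcomp Require Import trigo.
From mathcomp Require Import ring.
Set Implicit Arguments.
Unset Strict Implicit.
Unset Printing Implicit Defensive.
Import Order.TTheory GRing.Theory Num.Theory.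
Local Open Scope ring_scope.
Local Open Scope complex_scope.

Section ConjugateTranspose.
Variable R : rcfType.
Implicit Types (a b : R) (m n p : nat).

Lemma adjD m n (A B : 'M[R[i]]_(m, n)) : adj (A + B) = adj A + adj B.
Proof. by rewrite /adj map_mxD linearD. Qed.

Lemma adj_realZ m n a (A : 'M[R[i]]_(m, n)) : adj (a%:C *: A) = a%:C *: adj A.
Proof.
by apply/matrixP=> i j; rewrite !mxE rmorphM; congr (_ * _); apply: conjc_real.
Qed.

Lemma adjK m n (A : 'M[R[i]]_(m, n)) : adj (adj A) = A.
Proof. by apply/matrixP=> i j; rewrite !mxE conjcK. Qed.

Lemma adjM m n p (A : 'M[R[i]]_(m, n)) (B : 'M[R[i]]_(n, p)) :
  adj (A *m B) = adj B *m adj A.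
Proof. by rewrite /adj map_mxM trmx_mul. Qed.

Lemma mxReD m (A B : 'M[R[i]]_m) : mxRe (A + B) = mxRe A + mxRe B.
Proof. by rewrite /mxRe adjD addrACA scalerDr. Qed.

Lemma mxRe_realZ m a (A : 'M[R[i]]_m) : mxRe (a%:C *: A) = a%:C *: mxRe A.
Proof. by rewrite /mxRe adj_realZ -scalerDr scalerA mulrC -scalerA. Qed.

Lemma mxRe_mulr2n m (A : 'M[R[i]]_m) : mxRe A *+ 2 = A + adj A.
Proof. by rewrite /mxRe -scaler_nat scalerA mulfV ?scale1r ?pnatr_eq0. Qed.

Lemma unitaryE m (U : 'M[R[i]]_m) : unitary U <-> absSq U = 1%:M.
Proof. by split=> [[]//|UU1]; split=> //; apply: mulmx1C. Qed.

Lemma absSqD m (A B : 'M[R[i]]_m) :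
  absSq (A + B) = absSq A + absSq B + mxRe (adj A *m B) *+ 2.
Proof.
rewrite mxRe_mulr2n adjM adjK /absSq adjD mulmxDl !mulmxDr.
by rewrite [adj B *m A + _]addrC addrACA.
Qed.

Lemma absSq_realZ m a (A : 'M[R[i]]_m) :
  absSq (a%:C *: A) = (a ^+ 2)%:C *: absSq A.
Proof.
by rewrite /absSq adj_realZ -scalemxAl -scalemxAr scalerA rmorphXn.
Qed.

Lemma absSq_real_comb m a b (X Y Z : 'M[R[i]]_m) :
  absSq (a%:C *: X + b%:C *: Y + Z) =
    (a ^+ 2)%:C *: absSq X + (b ^+ 2)%:C *: absSq Y + absSq Z
    + (a * b *+ 2)%:C *: mxRe (adj X *m Y)
    + (a *+ 2)%:C *: mxRe (adj X *m Z) + (b *+ 2)%:C *: mxRe (adj Y *m Z).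
Proof.
rewrite !absSqD !absSq_realZ adjD !adj_realZ mulmxDl -!scalemxAl -scalemxAr.
rewrite !mxReD !mxRe_realZ.
(* [ring] is only fast once the matrices are opaque variables *)
move: (absSq X) (absSq Y) (absSq Z) => AX AY AZ.
move: (mxRe _) (mxRe _) (mxRe _) => RXY RXZ RYZ.
by apply/matrixP=> i j; rewrite !mxE; ring.
Qed.

End ConjugateTranspose.

Section TrigonometricIdentities.
Variable R : realType.

Lemma trig_quadratic_coefs (a b d p q r u : R[i]) :
  (forall phi : R, (cos phi ^+ 2)%:C * a + (sin phi ^+ 2)%:C * b + d
     + (cos phi * sin phi *+ 2)%:C * p + (cos phi *+ 2)%:C * q
     + (sin phi *+ 2)%:C * r = u) ->
  [/\ a = u - d, b = u - d, p = 0, q = 0 & r = 0].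
Proof.
move=> H.
have := H 0; have := H pi; rewrite cos0 sin0 cospi sinpi => Hpi H0.
have := H (pi / 2); have := H (- (pi / 2)).
rewrite cosN sinN cos_pihalf sin_pihalf => Hmpihalf Hpihalf.
have q0 : q = 0.
  have : q *+ 4 = 0 by rewrite -(subrr u) -{1}H0 -Hpi; ring.
  by move/eqP; rewrite mulrn_eq0 => /eqP.
have r0 : r = 0.
  have : r *+ 4 = 0 by rewrite -(subrr u) -{1}Hpihalf -Hmpihalf; ring.
  by move/eqP; rewrite mulrn_eq0 => /eqP.
have a_eq : a = u - d by rewrite -H0 q0; ring.
have b_eq : b = u - d by rewrite -Hpihalf r0; ring.
have cos_sin_pi4 : cos (pi / 4) * sin (pi / 4) *+ 2 = 1 :> R.
  by rewrite -sin_mulr2n -[RHS]sin_pihalf; congr sin; field.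
have := H (pi / 4); rewrite cos_sin_pi4 cos2sin2 a_eq b_eq q0 r0 => Hpi4.
by split=> //; rewrite -(subrr u) -{1}Hpi4; ring.
Qed.

Lemma trig_quadratic_coefs_mx m n (A B D P Q S U : 'M[R[i]]_(m, n)) :
  (forall phi : R, (cos phi ^+ 2)%:C *: A + (sin phi ^+ 2)%:C *: B + D
     + (cos phi * sin phi *+ 2)%:C *: P + (cos phi *+ 2)%:C *: Q
     + (sin phi *+ 2)%:C *: S = U) ->
  [/\ A = U - D, B = U - D, P = 0, Q = 0 & S = 0].
Proof.
move=> H.
have coefs i j : [/\ A i j = U i j - D i j, B i j = U i j - D i j,
                     P i j = 0, Q i j = 0 & S i j = 0].
  apply: trig_quadratic_coefs => phi.
  by have /matrixP/(_ i j) := H phi; rewrite !mxE.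
by split; apply/matrixP=> i j; rewrite !mxE; have [] := coefs i j.
Qed.

End TrigonometricIdentities.

Theorem lemma3p1 (R : realType) (m : nat) (X Y Z : 'M[R[i]]_m) :
  (forall phi : R, unitary ((cos phi)%:C *: X + (sin phi)%:C *: Y + Z)) <->
  (absSq X = absSq Y /\ absSq Y = 1%:M - absSq Z /\
   mxRe (adj X *m Y) = 0 /\ mxRe (adj X *m Z) = 0 /\ mxRe (adj Y *m Z) = 0).
Proof.
split=> [unitaryU | [XY [YZ [ReXY [ReXZ ReYZ]]]] phi].
- have absSq_U (phi : R) :=
    etrans (esym (absSq_real_comb (cos phi) (sin phi) X Y Z))
           ((unitaryE _).1 (unitaryU phi)).
  by have [-> -> -> -> ->] := trig_quadratic_coefs_mx absSq_U.
- apply/unitaryE; rewrite absSq_real_comb ReXY ReXZ ReYZ !scaler0 !addr0 XY YZ.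
  by rewrite -scalerDl -rmorphD cos2Dsin2 rmorph1 scale1r subrK.
Qed.
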